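(* Let $D$ be a division ring, $A$ a finitely generated free abelian group and $D * A$ a crossed product. Let $N$ be a finitely generated critical $D * A$-module such that $\mathrm{gk}(N)\le \mathrm{gk}(L)$ for every nonzero finitely generated $D * A$-module $L$. Then $N$ is simple.
   Context: A crossed product $D * A$ of an abelian group $A$ over a division ring $D$ is a ring with a $D$-basis $\{\bar a: a\in A\}$ with $\bar a_1\bar a_2=\tau(a_1,a_2)\overline{a_1a_2}$ ($\tau(a_1,a_2)\in D\setminus\{0\}$) and $\bar a d=\sigma_a(d)\bar a$ for automorphisms $\sigma_a$ of $D$. $\mathrm{gk}$ denotes Gelfand–Kirillov dimension measured over $D$. A nonzero $D * A$-module $M$ is critical if for every nonzero proper submodule $N'$ of $M$ one has $\mathrm{gk}(M)>\mathrm{gk}(M/N')$. *)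

From HB Require Import structures.
From mathcomp Require Import all_boot all_order all_algebra.
From mathcomp Require Import all_classical all_reals ereal sequences exp.
Set Implicit Arguments. Unset Strict Implicit. Unset Printing Implicit Defensive.
Import Order.TTheory GRing.Theory Num.Theory.
Local Open Scope ring_scope.

(* The free abelian group of rank n is represented by 'rV[int]_n (additively). *)
Notation fgfree n := 'rV[int]_n.

Definition division_ring (D : unitRingType) : Prop :=
  forall x : D, x != 0 -> x \is a GRing.unit.

Definition ring_aut (D : unitRingType) (f : D -> D) : Prop :=
  [/\ forall x y, f (x + y) = f x + f y,
      forall x y, f (x * y) = f x * f y,
      f 1 = 1 & bijective f].

(* S (together with the embedding iota : D -> S and the elements u a = \bar a)
   is a crossed product D * A of A = Z^n over D. *)
Definition crossed_product (D : unitRingType) (S : nzRingType) (n : nat)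
    (iota : D -> S) (u : fgfree n -> S) : Prop :=
  [/\
      (forall s : S, exists (as_ : seq (fgfree n)) (cs : seq D),
          s = \sum_(i < size as_) iota cs`_i * u as_`_i),
      (forall (as_ : seq (fgfree n)) (cs : seq D), uniq as_ ->
          size cs = size as_ ->
          \sum_(i < size as_) iota cs`_i * u as_`_i = 0 -> all (eq_op^~ 0) cs),
      (exists tau : fgfree n -> fgfree n -> D,
          forall a b, tau a b != 0 /\ u a * u b = iota (tau a b) * u (a + b)) &
      (exists sigma : fgfree n -> D -> D,
          forall a, ring_aut (sigma a) /\
                    forall d, u a * iota d = iota (sigma a d) * u a)].

Section Modules.
Variables (S : nzRingType) (M : lmodType S).

Definition submodule (P : M -> Prop) : Prop :=
  [/\ P 0, (forall x y, P x -> P y -> P (x + y)) &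
      (forall (s : S) x, P x -> P (s *: x))].

Definition fin_gen : Prop :=
  exists X : seq M, forall m : M, exists c : 'I_(size X) -> S,
    m = \sum_(i < size X) c i *: X`_i.

Definition nonzero_mod : Prop := exists x : M, x != 0.

Definition simple_mod : Prop :=
  nonzero_mod /\
  forall P, submodule P -> (forall x, P x -> x = 0) \/ (forall x, P x).

Variables (D : unitRingType) (iota : D -> S).

(* k elements of T (selected by f) are left D-linearly independent modulo the
   submodule P, i.e. their images in M/P are D-linearly independent. *)
Definition indep_mod (P : M -> Prop) (T : seq M) (k : nat) : Prop :=
  exists f : 'I_k -> 'I_(size T), forall c : 'I_k -> D,
    P (\sum_(i < k) iota (c i) *: T`_(f i)) -> forall i, c i = 0.

(* dim_D of the left D-span of the image of T in M/P. *)
Definition dimD (P : M -> Prop) (T : seq M) : nat :=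
  \max_(k < (size T).+1 | `[< indep_mod P T k >]) k.

Variables (n : nat) (u : fgfree n -> S).

(* the box {a in Z^n : |a_i| <= k}; D-span of {u a | a in box k} is V^k,
   where V is the frame spanned by u a, a in {-1,0,1}^n. *)
Definition box (k : nat) : seq (fgfree n) :=
  [seq \row_i (((nat_of_ord (f i))%:Z) - k%:Z) | f : {ffun 'I_n -> 'I_(k.*2.+1)} <- enum {ffun 'I_n -> 'I_(k.*2.+1)}].

Definition frame_span (k : nat) (X : seq M) : seq M :=
  [seq u a *: x | a <- box k, x <- X].

Local Open Scope ereal_scope.

Definition gk_quot (R : realType) (P : M -> Prop) : \bar R :=
  ereal_sup (range (fun X : seq M =>
    limn_esup (fun k : nat =>
      ((ln ((dimD P (frame_span k X))%:R : R) / ln (k%:R : R))%R)%:E))).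

Definition gk (R : realType) : \bar R := gk_quot R (fun x => x = 0%R).

Definition critical (R : realType) : Prop :=
  nonzero_mod /\
  forall P, submodule P -> (exists x, P x /\ x != 0%R) -> (exists x, ~ P x) ->
    gk_quot R P < gk R.

End Modules.

(* If P is a nonzero proper submodule of N, the quotient N/P is a nonzero
   finitely generated module, so minimality gives gk N <= gk (N/P), while
   criticality gives gk (N/P) < gk N.  The GK dimension of N/P is by definition
   the one computed in N modulo P, so the only work is to build N/P as a
   module and to check that its D-dimension counts agree with those modulo P. *)
From HB Require Import structures.
From mathcomp Require Import all_boot all_order all_algebra.
From mathcomp Require Import all_classical all_reals ereal sequences exp.
Set Implicit Arguments. Unset Strict Implicit. Unset Printing Implicit Defensive.
Import Order.TTheory GRing.Theory Num.Theory.
Local Open Scope ring_scope.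

Section QuotientModule.
Variables (S : nzRingType) (N : lmodType S) (P : N -> Prop).
Hypothesis subP : submodule P.

Lemma submod0 : P 0. Proof. by case: subP. Qed.

Lemma submodD x y : P x -> P y -> P (x + y).
Proof. by case: subP => _ + _; apply. Qed.

Lemma submodZ s x : P x -> P (s *: x).
Proof. by case: subP => _ _; apply. Qed.

Lemma submodN x : P x -> P (- x).
Proof. by move=> /(submodZ (-1)); rewrite scaleN1r. Qed.

Lemma submod_subC x y : P (x - y) -> P (y - x).
Proof. by move=> /submodN; rewrite opprB. Qed.

Lemma submod_subr_trans x y z : P (x - y) -> P (y - z) -> P (x - z).
Proof. by move=> Pxy Pyz; rewrite -[x](subrK y) -addrA; apply: submodD. Qed.

(* N/P is encoded as the set of canonical representatives of the cosets x + P. *)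
Definition congr_mod (x : N) : pred N := fun y => `[< P (x - y) >].

Lemma congr_mod_inhabited x : exists y, congr_mod x y.
Proof. by exists x; apply/asboolP; rewrite subrr; apply: submod0. Qed.

Definition quot_repr x : N := xchoose (congr_mod_inhabited x).

Lemma quot_reprP x : P (x - quot_repr x).
Proof. exact/asboolP/(xchooseP (congr_mod_inhabited x)). Qed.

Lemma eq_quot_repr x y : P (x - y) -> quot_repr x = quot_repr y.
Proof.
move=> Pxy; apply: eq_xchoose => z; apply/asboolP/asboolP => Pz.
  exact: submod_subr_trans (submod_subC Pxy) Pz.
exact: submod_subr_trans Pxy Pz.
Qed.

Lemma quot_repr_eqP x y : quot_repr x = quot_repr y -> P (x - y).
Proof.
move=> exy; apply: submod_subr_trans (quot_reprP x) _.
by rewrite exy; apply/submod_subC/quot_reprP.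
Qed.

Lemma quot_repr_idem x : quot_repr (quot_repr x) = quot_repr x.
Proof. exact/eq_quot_repr/submod_subC/quot_reprP. Qed.

Definition quot_mod := {x : N | quot_repr x == x}.
HB.instance Definition _ := Choice.on quot_mod.

Definition quot_pi (x : N) : quot_mod :=
  exist _ (quot_repr x) (introT eqP (quot_repr_idem x)).

Lemma quot_piP x y : quot_pi x = quot_pi y <-> P (x - y).
Proof.
split; first by move=> /(congr1 val) /quot_repr_eqP.
by move=> /eq_quot_repr exy; apply: val_inj.
Qed.

Lemma quot_valK (a : quot_mod) : quot_pi (val a) = a.
Proof. by apply: val_inj; case: a => x /= /eqP. Qed.

Lemma quot_pi_val x : P (val (quot_pi x) - x).
Proof. exact/submod_subC/quot_reprP. Qed.

Lemma quot_ind (Q : quot_mod -> Prop) : (forall x, Q (quot_pi x)) -> forall a, Q a.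
Proof. by move=> Qpi a; rewrite -(quot_valK a). Qed.

Definition quot_add (a b : quot_mod) := quot_pi (val a + val b).
Definition quot_opp (a : quot_mod) := quot_pi (- val a).
Definition quot_scale (s : S) (a : quot_mod) := quot_pi (s *: val a).

Lemma quot_addE x y : quot_add (quot_pi x) (quot_pi y) = quot_pi (x + y).
Proof.
apply/quot_piP; rewrite opprD addrACA.
by apply: submodD; apply: quot_pi_val.
Qed.

Lemma quot_oppE x : quot_opp (quot_pi x) = quot_pi (- x).
Proof. by apply/quot_piP; rewrite -opprD; apply/submodN/quot_pi_val. Qed.

Lemma quot_scaleE s x : quot_scale s (quot_pi x) = quot_pi (s *: x).
Proof. by apply/quot_piP; rewrite -scalerBr; apply/submodZ/quot_pi_val. Qed.

Lemma quot_addA : associative quot_add.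
Proof. by do 3!elim/quot_ind=> ?; rewrite !quot_addE addrA. Qed.

Lemma quot_addC : commutative quot_add.
Proof. by do 2!elim/quot_ind=> ?; rewrite !quot_addE addrC. Qed.

Lemma quot_add0 : left_id (quot_pi 0) quot_add.
Proof. by elim/quot_ind=> x; rewrite quot_addE add0r. Qed.

Lemma quot_addN : left_inverse (quot_pi 0) quot_opp quot_add.
Proof. by elim/quot_ind=> x; rewrite quot_oppE quot_addE addNr. Qed.

HB.instance Definition _ :=
  GRing.isZmodule.Build quot_mod quot_addA quot_addC quot_add0 quot_addN.

Lemma quot_scaleA a b v : quot_scale a (quot_scale b v) = quot_scale (a * b) v.
Proof. by elim/quot_ind: v => x; rewrite !quot_scaleE scalerA. Qed.

Lemma quot_scale1 : left_id 1 quot_scale.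
Proof. by elim/quot_ind=> x; rewrite quot_scaleE scale1r. Qed.

Lemma quot_scaleDr : right_distributive quot_scale +%R.
Proof.
move=> s; do 2!elim/quot_ind=> ?.
by rewrite /+%R /= quot_addE !quot_scaleE quot_addE scalerDr.
Qed.

Lemma quot_scaleDl v : {morph quot_scale^~ v : a b / a + b}.
Proof.
by elim/quot_ind: v => x a b; rewrite !quot_scaleE /+%R /= quot_addE scalerDl.
Qed.

HB.instance Definition _ := GRing.Zmodule_isLmodule.Build S quot_mod
  quot_scaleA quot_scale1 quot_scaleDr quot_scaleDl.

Lemma quot_piD x y : quot_pi x + quot_pi y = quot_pi (x + y).
Proof. exact: quot_addE. Qed.

Lemma quot_piZ s x : s *: quot_pi x = quot_pi (s *: x).
Proof. exact: quot_scaleE. Qed.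

Lemma quot_pi_eq0 x : quot_pi x = 0 <-> P x.
Proof. by rewrite [0]/(quot_pi 0) quot_piP subr0. Qed.

Lemma quot_pi_sum I (r : seq I) (F : I -> N) :
  quot_pi (\sum_(i <- r) F i) = \sum_(i <- r) quot_pi (F i).
Proof. exact: (big_morph quot_pi (fun x y => esym (quot_piD x y))). Qed.

Lemma quot_pi_lincomb k (c : 'I_k -> S) (T : seq N) (f : 'I_k -> 'I_(size T)) :
  \sum_(i < k) c i *: (map quot_pi T)`_(f i) =
  quot_pi (\sum_(i < k) c i *: T`_(f i)).
Proof.
by rewrite quot_pi_sum; apply: eq_bigr => i _; rewrite (nth_map 0) // quot_piZ.
Qed.

Lemma fin_gen_quot : fin_gen N -> fin_gen quot_mod.
Proof.
move=> [X genX]; exists (map quot_pi X) => m.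
have [c valE] := genX (val m); rewrite size_map; exists c.
by rewrite -(quot_valK m) valE -(quot_pi_lincomb (T := X) c id).
Qed.

Lemma nonzero_quot : (exists x, ~ P x) -> nonzero_mod quot_mod.
Proof. by move=> [x NPx]; exists (quot_pi x); apply/eqP => /quot_pi_eq0. Qed.

Variables (D : unitRingType) (iota : D -> S) (n : nat) (u : 'rV[int]_n -> S).

Lemma indep_mod_quot (T : seq N) k :
  indep_mod iota (fun x : quot_mod => x = 0) (map quot_pi T) k <->
  indep_mod iota P T k.
Proof.
rewrite /indep_mod size_map.
split=> -[f indep]; exists f => c; move: (indep c);
  by rewrite quot_pi_lincomb quot_pi_eq0.
Qed.

Lemma dimD_quot (T : seq N) :
  dimD iota (fun x : quot_mod => x = 0) (map quot_pi T) = dimD iota P T.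
Proof.
rewrite /dimD size_map; apply: eq_bigl => k.
by apply/asboolP/asboolP; rewrite indep_mod_quot.
Qed.

Lemma frame_span_quot k (X : seq N) :
  frame_span u k (map quot_pi X) = map quot_pi (frame_span u k X).
Proof.
by rewrite /frame_span map_allpairs allpairs_mapr; apply: eq_allpairs => a x /=;
  rewrite quot_piZ.
Qed.

Lemma gk_quot_mod (R : realType) : gk quot_mod iota u R = gk_quot iota u R P.
Proof.
rewrite /gk /gk_quot; congr ereal_sup; apply/seteqP; split=> _ [X _ <-].
  exists (map val X) => //; congr limn_esup; apply: funext => k.
  by rewrite -[in RHS](mapK quot_valK X) frame_span_quot dimD_quot.
exists (map quot_pi X) => //; congr limn_esup; apply: funext => k.
by rewrite frame_span_quot dimD_quot.
Qed.

End QuotientModule.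

Theorem proposition3p8 (R : realType) (D : unitRingType) (n : nat)
    (S : nzRingType) (iota : {rmorphism D -> S}) (u : 'rV[int]_n -> S)
    (N : lmodType S) :
  division_ring D ->
  crossed_product iota u ->
  fin_gen N ->
  critical N iota u R ->
  (forall L : lmodType S, nonzero_mod L -> fin_gen L ->
     (gk N iota u R <= gk L iota u R)%E) ->
  simple_mod N.
Proof.
move=> _ _ fgN [nzN crit] gk_min; split=> // P subP.
have [zeroP|/existsNP[x /not_implyP[Px /eqP nz_x]]] :=
  pselect (forall x, P x -> x = 0); first by left.
have [fullP|/existsNP NP] := pselect (forall x, P x); first by right.
have gk_lt := crit P subP (ex_intro _ x (conj Px nz_x)) NP.
have gk_le := gk_min _ (nonzero_quot subP NP) (fin_gen_quot subP fgN).
by move: (lt_le_trans gk_lt gk_le); rewrite gk_quot_mod ltxx.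
Qed.
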